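(* Let $\phi$ be an escort and let $V$ be a $C^1$ function on an open neighbourhood of the interior $\Delta^n_\circ=\{x\in\mathbb{R}^n: x_i>0,\ \sum_ix_i=1\}$ of the simplex, with Euclidean gradient $f=\nabla V$. Let $x(t)$ be a solution in $\Delta^n_\circ$ of the escort replicator equation \[\dot x_i=\phi(x_i)\left(f_i(x)-\mathbb{E}^{\phi}_{x}[f(x)]\right),\qquad i=1,\dots,n.\] Then along the solution \[\frac{d}{dt}V(x)=Z_\phi(x)\,\mathrm{Var}^{\phi}_{x}[f(x)].\]
   Context: An escort is a continuous function $\phi$ that is strictly positive on $(0,1]$. For $x=(x_1,\dots,x_n)$: the partition function is $Z_\phi(x)=\sum_{i=1}^n\phi(x_i)$; for a vector $g\in\mathbb{R}^n$ the escort expectation is $\mathbb{E}^{\phi}_{x}[g]=\frac{1}{Z_\phi(x)}\sum_{i=1}^n\phi(x_i)g_i$; and the escort variance is $\mathrm{Var}^{\phi}_{x}[g]=\mathbb{E}^{\phi}_{x}\big[(g-\mathbb{E}^{\phi}_{x}[g])^2\big]=\frac{1}{Z_\phi(x)}\sum_{i}\phi(x_i)\big(g_i-\mathbb{E}^{\phi}_{x}[g]\big)^2$. *)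

From HB Require Import structures.
From mathcomp Require Import all_boot all_order all_algebra.
From mathcomp Require Import all_classical all_reals all_analysis.
Set Implicit Arguments. Unset Strict Implicit. Unset Printing Implicit Defensive.
Import Order.TTheory GRing.Theory Num.Theory.
Import numFieldNormedType.Exports.
Local Open Scope ring_scope.
Local Open Scope classical_set_scope.

Definition escort (R : realType) (phi : R -> R) : Prop :=
  {within `[0, 1], continuous phi} /\ (forall u : R, 0 < u <= 1 -> 0 < phi u).

Definition simplex_int (R : realType) (n : nat) : set 'rV[R]_n :=
  [set x | (forall i : 'I_n, 0 < x ord0 i) /\ \sum_(i < n) x ord0 i = 1].

Definition Zphi (R : realType) (n : nat) (phi : R -> R) (x : 'rV[R]_n) : R :=
  \sum_(i < n) phi (x ord0 i).

Definition escE (R : realType) (n : nat) (phi : R -> R) (x g : 'rV[R]_n) : R :=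
  (Zphi phi x)^-1 * \sum_(i < n) phi (x ord0 i) * g ord0 i.

Definition escVar (R : realType) (n : nat) (phi : R -> R) (x g : 'rV[R]_n) : R :=
  (Zphi phi x)^-1 * \sum_(i < n) phi (x ord0 i) * (g ord0 i - escE phi x g) ^+ 2.

Definition evec (R : realType) (n : nat) (i : 'I_n) : 'rV[R]_n := delta_mx ord0 i.

From HB Require Import structures.
From mathcomp Require Import all_boot all_order all_algebra.
From mathcomp Require Import all_classical all_reals all_analysis.
From mathcomp Require Import ring.
Import Order.TTheory GRing.Theory Num.Theory.
Import numFieldNormedType.Exports.
Local Open Scope ring_scope.
Local Open Scope classical_set_scope.

(** By the chain rule, [d/dt V(x) = sum_i xdot_i f_i(x)].  Substituting the
    replicator field, the sum is [sum_i phi(x_i) (f_i - E) f_i]; subtracting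
    [E * sum_i phi(x_i) (f_i - E)], which vanishes because [E] is the
    [phi]-weighted mean of [f], turns it into
    [sum_i phi(x_i) (f_i - E)^2 = Z Var]. *)

Section EscortReplicator.
Variables (R : realType) (n : nat).
Implicit Types (phi : R -> R) (x g : 'rV[R]_n).

Lemma is_derive_comp_partial (V : 'rV[R]_n -> R) (c : R -> 'rV[R]_n) t dc :
  differentiable V (c t) -> is_derive t 1 c dc ->
  is_derive t 1 (V \o c) (\sum_(i < n) dc ord0 i * 'D_(evec R i) V (c t)).
Proof.
move=> dV dc_t; have dc_eq : 'D_1 c t = dc by exact: derive_val.
have dif_c : differentiable c t by apply/derivable1_diffP; case: dc_t.
apply: DeriveDef; first exact/diff_derivable/differentiable_comp.
rewrite deriveE; last exact: differentiable_comp.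
rewrite diff_comp // /= -(deriveE _ dif_c) dc_eq [dc in 'd V _ dc]row_sum_delta.
rewrite linear_sum; apply: eq_bigr => i _.
by rewrite linearZ /= -(deriveE _ dV).
Qed.

Lemma simplex_int_coord x i : simplex_int x -> 0 < x ord0 i <= 1.
Proof.
move=> [x_gt0 x_sum]; rewrite x_gt0 -x_sum (bigD1 i) //= lerDl.
by apply: sumr_ge0 => j _; exact/ltW.
Qed.

Lemma Zphi_gt0 phi x : (forall u, 0 < u <= 1 -> 0 < phi u) ->
  simplex_int x -> 0 < Zphi phi x.
Proof.
move=> phi_gt0 x_int; have [_ x_sum] := x_int.
have [i0 _|no_index] := pickP 'I_n; last first.
  by move: x_sum; rewrite big_pred0 // => /eqP; rewrite eq_sym oner_eq0.
rewrite /Zphi (bigD1 i0) //= ltr_pwDl //.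
  exact/phi_gt0/simplex_int_coord.
by apply: sumr_ge0 => i _; exact/ltW/phi_gt0/simplex_int_coord.
Qed.

Lemma escE_centered phi x g : Zphi phi x != 0 ->
  \sum_(i < n) phi (x ord0 i) * (g ord0 i - escE phi x g) = 0.
Proof.
move=> Z_neq0; under eq_bigr => i _ do rewrite mulrBr.
by rewrite sumrB -mulr_suml /escE mulVKf // subrr.
Qed.

Lemma Zphi_escVar phi x g : Zphi phi x != 0 ->
  Zphi phi x * escVar phi x g =
  \sum_(i < n) phi (x ord0 i) * (g ord0 i - escE phi x g) * g ord0 i.
Proof.
move=> Z_neq0; rewrite /escVar mulVKf //; set E := escE phi x g.
have centered := escE_centered phi x g Z_neq0.
rewrite -[RHS]subr0 -[X in _ - X](mulr0 E) -[X in _ - E * X]centered -/E.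
rewrite mulr_sumr -sumrB; apply: eq_bigr => i _; ring.
Qed.

End EscortReplicator.

Theorem mainTheorem2 (R : realType) (n : nat) (phi : R -> R)
  (U : set 'rV[R]_n) (V : 'rV[R]_n -> R) (f : 'rV[R]_n -> 'rV[R]_n)
  (a b : R) (x : R -> 'rV[R]_n) :
  escort phi ->
  open U -> @simplex_int R n `<=` U ->
  (* V is C^1 on U with Euclidean gradient f *)
  (forall y, U y -> differentiable V y) ->
  {in U, continuous f} ->
  (forall y (i : 'I_n), U y -> 'D_(@evec R n i) V y = f y ord0 i) ->
  (* x is a solution in the open simplex of the escort replicator equation on ]a,b[ *)
  (forall t, t \in `]a, b[ -> @simplex_int R n (x t)) ->
  (forall t, t \in `]a, b[ ->
     is_derive t 1 x (\row_(i < n) (phi (x t ord0 i) *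
                        (f (x t) ord0 i - escE phi (x t) (f (x t)))))) ->
  forall t, t \in `]a, b[ ->
    is_derive t 1 (V \o x) (Zphi phi (x t) * escVar phi (x t) (f (x t))).
Proof.
move=> [_ phi_gt0] _ sU dV _ gradV x_int x_ode t tab.
have Ux : U (x t) by exact/sU/x_int.
have Z_neq0 : Zphi phi (x t) != 0.
  by rewrite gt_eqF //; apply: Zphi_gt0 => //; exact: x_int.
rewrite Zphi_escVar //; set E := escE phi (x t) (f (x t)).
pose xdot := \row_(i < n) (phi (x t ord0 i) * (f (x t) ord0 i - E)).
have -> : \sum_(i < n) phi (x t ord0 i) * (f (x t) ord0 i - E) * f (x t) ord0 i
        = \sum_(i < n) xdot ord0 i * 'D_(evec R i) V (x t).
  by apply: eq_bigr => i _; rewrite gradV // mxE.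
exact: is_derive_comp_partial (dV _ Ux) (x_ode t tab).
Qed.
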